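(* Let $\epsilon>0$ and let $A^\epsilon$ be an arbitrary selfadjoint operator in $\mathcal{H}$ with $\overline{W(A^\epsilon)}=[\inf W(A)-\epsilon,\sup W(A)+\epsilon]$. Define \[ T^\epsilon(\omega):=A^\epsilon-\omega^2-\frac{\omega^2}{c-id\omega-\omega^2}B,\quad \mathop{\rm dom} T^\epsilon(\omega)=\mathop{\rm dom} A^\epsilon,\quad \omega\in\mathcal{C}, \] and let $W_\Omega(T^\epsilon)$ be the enclosure of the numerical range of $T^\epsilon$ defined in the same way as $W_\Omega(T)$, i.e. with $\Omega$ replaced by $\overline{W(A^\epsilon)}\times\overline{W(B)}$. Then $\overline{W_\Omega^\epsilon(T)}\cap i\mathbb{R}=W_\Omega(T^\epsilon)\cap i\mathbb{R}$.
   Context: Let $\mathcal{H}$ be a Hilbert space, $A$ a selfadjoint operator in $\mathcal{H}$, $B$ a non-zero bounded selfadjoint operator in $\mathcal{H}$, and $c\geq 0$, $d>0$ real constants. Set $\theta:=\sqrt{c-d^2/4}$ (principal square root), $\delta_\pm:=\pm\theta-id/2$, $\mathcal{C}:=\mathbb{C}\setminus\{\delta_+,\delta_-\}$, and \[ T(\omega):=A-\omega^2-\frac{\omega^2}{c-id\omega-\omega^2}B,\quad \mathop{\rm dom} T(\omega)=\mathop{\rm dom} A,\quad \omega\in\mathcal{C}. \] $W(\cdot)$ denotes the numerical range of an operator. For $(\alpha,\beta)\in\mathbb{R}^2$ let $t_{(\alpha,\beta)}(\omega):=\alpha-\omega^2-\frac{\omega^2}{c-id\omega-\omega^2}\beta$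 and $p_{(\alpha,\beta)}(\omega):=(\alpha-\omega^2)(c-id\omega-\omega^2)-\beta\omega^2$, with roots $r_n(\alpha,\beta)$, $n=1,\dots,4$, ordered continuously in $(\alpha,\beta)$ and extended to $\alpha=\pm\infty$ by their limit values in $\overline{\mathbb{C}}=\mathbb{C}\cup\{\infty\}$. Let $\Omega:=\overline{W(A)}\times\overline{W(B)}\subset\overline{\mathbb{R}}\times\mathbb{R}$ and $W_\Omega(T):=\bigcup_{n=1}^4\bigcup_{(\alpha,\beta)\in\Omega}r_n(\alpha,\beta)$, an enclosure of the numerical range of $T$. For $\epsilon>0$ define the enclosure of the $\epsilon$-pseudonumerical range \[ W_\Omega^\epsilon(T):=W_\Omega(T)\cup\{\omega\in\mathcal{C}\setminus W_\Omega(T):\exists(\alpha,\beta)\in\Omega,\ |t_{(\alpha,\beta)}(\omega)|<\epsilon\}. \] *)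

From HB Require Import structures.
From mathcomp Require Import all_boot all_order all_algebra.
From mathcomp Require Import complex.
From mathcomp Require Import all_classical all_reals all_analysis.
Set Implicit Arguments. Unset Strict Implicit. Unset Printing Implicit Defensive.
Import Order.TTheory GRing.Theory Num.Theory.
Import numFieldNormedType.Exports.
Local Open Scope ring_scope.
Local Open Scope classical_set_scope.
Local Open Scope complex_scope.

Section HilbertOps.
Variable R : realType.
Local Notation C := R[i].

Definition hnorm (V : lmodType C) (ip : V -> V -> C) (x : V) : R :=
  Num.sqrt (complex.Re (ip x x)).

Definition is_inner_product (V : lmodType C) (ip : V -> V -> C) : Prop :=
  [/\ (forall x y z, ip (x + y) z = ip x z + ip y z),
      (forall (a : C) x y, ip (a *: x) y = a * ip x y),
      (forall x y, ip y x = (ip x y)^*),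
      (forall x, 0 <= ip x x) &
      (forall x, ip x x = 0 -> x = 0)].

Definition hcomplete (V : lmodType C) (ip : V -> V -> C) : Prop :=
  forall u : nat -> V,
    (forall e : R, 0 < e -> exists N, forall m n, (N <= m)%N -> (N <= n)%N ->
        hnorm ip (u m - u n) < e) ->
    exists l : V, forall e : R, 0 < e -> exists N, forall n, (N <= n)%N ->
        hnorm ip (u n - l) < e.

Definition is_hilbert (V : lmodType C) (ip : V -> V -> C) : Prop :=
  is_inner_product ip /\ hcomplete ip.

(** * (Possibly unbounded) operators: a map [A : V -> V] together with its domain
    [D : set V]; only the values of [A] on [D] are meaningful. *)

Definition is_subspace (V : lmodType C) (D : set V) : Prop :=
  D 0 /\ forall (a : C) x y, D x -> D y -> D (a *: x + y).

Definition linear_on (V : lmodType C) (D : set V) (A : V -> V) : Prop :=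
  forall (a : C) x y, D x -> D y -> A (a *: x + y) = a *: A x + A y.

Definition hdense (V : lmodType C) (ip : V -> V -> C) (D : set V) : Prop :=
  forall (x : V) (e : R), 0 < e -> exists2 y, D y & hnorm ip (x - y) < e.

(** [A] (densely defined on [D]) equals its adjoint [A^*]:
    [y \in dom A^*] with [A^* y = z]  iff  [<A x, y> = <x, z>] for all [x \in D]. *)
Definition selfadjoint (V : lmodType C) (ip : V -> V -> C) (D : set V)
    (A : V -> V) : Prop :=
  [/\ is_subspace D, linear_on D A, hdense ip D &
      forall y z : V, (forall x, D x -> ip (A x) y = ip x z) <-> (D y /\ z = A y)].

Definition bounded_selfadjoint (V : lmodType C) (ip : V -> V -> C)
    (B : V -> V) : Prop :=
  selfadjoint ip setT B /\
  exists M : R, forall x, hnorm ip (B x) <= M * hnorm ip x.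

(** Numerical range W(A) = { <A x, x> : x \in dom A, ||x|| = 1 }.  For a
    selfadjoint (symmetric) operator these values are real; we record
    their real parts, as a subset of R. *)
Definition numrange (V : lmodType C) (ip : V -> V -> C) (D : set V)
    (A : V -> V) : set R :=
  [set complex.Re (ip (A x) x) | x in [set x | D x /\ ip x x = 1]].

Definition numrange_cl_ext (V : lmodType C) (ip : V -> V -> C) (D : set V)
    (A : V -> V) : set (\bar R) :=
  closure [set (r%:E) | r in numrange ip D A].

Definition numrange_cl (V : lmodType C) (ip : V -> V -> C) (B : V -> V) : set R :=
  closure (numrange ip setT B).

Definition theta (c d : R) : C :=
  if 0 <= c - d ^+ 2 / 4 then (Num.sqrt (c - d ^+ 2 / 4))%:C
  else (Num.sqrt (d ^+ 2 / 4 - c))%:C * 'i.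
Definition delta_p (c d : R) : C := theta c d - 'i * (d / 2)%:C.
Definition delta_m (c d : R) : C := - theta c d - 'i * (d / 2)%:C.

Definition tfun (c d alpha beta : R) (w : C) : C :=
  alpha%:C - w ^+ 2 - w ^+ 2 / (c%:C - 'i * d%:C * w - w ^+ 2) * beta%:C.
Definition pfun (c d alpha beta : R) (w : C) : C :=
  (alpha%:C - w ^+ 2) * (c%:C - 'i * d%:C * w - w ^+ 2) - beta%:C * w ^+ 2.

(** W_Omega for Omega = OA x OB with OA in \bar R, OB in R: the union over
    (alpha,beta) in Omega of all roots r_n(alpha,beta).  For finite alpha these
    are the roots of p_(alpha,beta); for alpha = +oo or -oo the limit values
    of the roots are delta_+, delta_- and (twice) the point infinity of the
    Riemann sphere, which is not an element of C. *)
Definition W_Omega (c d : R) (OA : set (\bar R)) (OB : set R) : set C :=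
  [set w | exists alpha beta, [/\ OA alpha, OB beta &
      (exists2 a : R, alpha = a%:E & pfun c d a beta w = 0) \/
      ((alpha = +oo%E \/ alpha = -oo%E) /\ (w = delta_p c d \/ w = delta_m c d))]].

Definition W_Omega_eps (c d : R) (OA : set (\bar R)) (OB : set R) (eps : R) :
    set C :=
  W_Omega c d OA OB `|`
  [set w | [/\ w <> delta_p c d, w <> delta_m c d, ~ W_Omega c d OA OB w &
     exists alpha beta, [/\ OA alpha, OB beta &
        exists2 a : R, alpha = a%:E & `|tfun c d a beta w| < eps%:C]]].

Definition closure_inC (S : set C) : set C :=
  [set w | forall e : R, 0 < e -> exists2 z, S z & `|z - w| < e%:C].

Definition imag_axis : set C := [set w | complex.Re w = 0].

End HilbertOps.

From HB Require Import structures.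
From mathcomp Require Import all_boot all_order all_algebra.
From mathcomp Require Import complex.
From mathcomp Require Import all_classical all_reals all_analysis.
From mathcomp Require Import ring lra.
From mathcomp Require polyrcf.
Import Order.TTheory GRing.Theory Num.Theory.
Import numFieldNormedType.Exports.
Set Implicit Arguments. Unset Strict Implicit. Unset Printing Implicit Defensive.
Local Open Scope ring_scope.
Local Open Scope classical_set_scope.
Local Open Scope complex_scope.
Import Normc.

(** On the imaginary axis the denominator [q(iy) = c + d y + y^2] of [t_(a,b)]
    is real, so where it does not vanish [t_(a,b)(iy) = a + y^2 + y^2 b / q(iy)]
    is real and affine in [(a, b)].  If [iy] is a limit of points [z] with
    [|t_(a,b)(z)| < eps], continuity of [t] in [z], uniform for [b] in the
    compact [closure W(B)], puts the affine image of [closure W(B)] within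
    [eps + eta] of [closure W(A)] for every [eta > 0]; by the intermediate value
    theorem some [b] then makes [t_(a,b)(iy) = 0] with [a] in the
    [eps]-enlargement of [closure W(A)], which is [closure W(A^eps)] because
    these closures are intervals.  Conversely, a root of [p_(a-x,b)] with [a] in
    [closure W(A)] and [|x| <= eps] is a limit of roots of the monic quartics
    [p_(a,b) - v q] with real [|v| < eps] (continuity of roots), and these lie
    in [W^eps_Omega(T)].  A zero [delta] of [q] on the axis lies in
    [W_Omega(T^eps)] when [closure W(A)] is unbounded or
    [p_(a,b)(delta) = - b delta^2] vanishes; otherwise the bound
    [|b| |z|^2 <= (|a| + |z|^2 + eps) |q(z)|] on [W^eps_Omega(T)] keeps it out
    of the closure. *)

Section ComplexModulus.
Variable R : rcfType.
Implicit Types (z w : R[i]) (r : R).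

Lemma normcE z : `|z| = (normc z)%:C.
Proof. by case: z. Qed.

Lemma normc_ge0 z : 0 <= normc z.
Proof. by case: z => a b; exact: sqrtr_ge0. Qed.

Lemma normc_ltR z r : (`|z| < r%:C) = (normc z < r).
Proof. by rewrite normcE ltcR. Qed.

Lemma normc_eq0 z : (normc z == 0) = (z == 0).
Proof. by rewrite -[z == 0]normr_eq0 normcE -(inj_eq (@complexI R)). Qed.

Lemma normc_gt0 z : (0 < normc z) = (z != 0).
Proof. by rewrite lt_def normc_ge0 normc_eq0 andbT. Qed.

Lemma normcR r : normc r%:C = `|r|.
Proof. by rewrite /normc /= expr0n /= addr0 sqrtr_sqr. Qed.

Lemma normcX z n : normc (z ^+ n) = normc z ^+ n.
Proof. by elim: n => [|n IH]; rewrite ?normc1 // !exprS normcM IH. Qed.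

Lemma distcC z w : normc (z - w) = normc (w - z).
Proof. by rewrite -normcN opprB. Qed.

Lemma ler_distcD z w : normc z <= normc w + normc (z - w).
Proof. by rewrite addrC -{1}(subrK w z) le_normcD. Qed.

Lemma normc_iR r : normc ('i * r%:C) = `|r|.
Proof. by rewrite normcM normcR /normc /= expr0n expr1n add0r sqrtr1 mul1r. Qed.

Lemma ReD z w : complex.Re (z + w) = complex.Re z + complex.Re w.
Proof. by case: z; case: w. Qed.

Lemma ReMR r z : complex.Re (r%:C * z) = r * complex.Re z.
Proof. by case: z => a b /=; rewrite mul0r subr0. Qed.

Lemma conjR r : Num.conj r%:C = r%:C :> R[i].
Proof. by rewrite conj_Creal // complex_real. Qed.

End ComplexModulus.

Lemma monic_root_near (C : numClosedFieldType) (p : {poly C}) (w e : C) :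
  p \is monic -> 0 <= e -> `|p.[w]| < e ^+ (size p).-1 ->
  exists2 z, root p z & `|z - w| < e.
Proof.
move=> p_monic e_ge0 p_small.
have [rs def_p] := closed_field_poly_normal p.
rewrite (monicP p_monic) scale1r in def_p.
have size_rs : (size p).-1 = size rs by rewrite def_p size_prod_XsubC.
have [/hasP[z z_rs near_z] | /hasPn far] := boolP (has (fun z => `|z - w| < e) rs).
  by exists z; rewrite // def_p root_prod_XsubC.
suff : e ^+ (size p).-1 <= `|p.[w]| by move=> /(lt_le_trans p_small); rewrite ltxx.
rewrite size_rs def_p horner_prod normr_prod.
have -> : e ^+ size rs = \prod_(z <- rs) e.
  by rewrite big_const_seq count_predT; elim: (size rs) => //= n <-; rewrite exprS.
rewrite big_seq [X in _ <= X]big_seq; apply: ler_prod => z z_rs.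
rewrite e_ge0 hornerXsubC distrC real_leNgt ?far ?ger0_real //.
Qed.

Section DampingFactor.
Variables (R : realType) (c d : R).
Local Notation C := R[i].
Implicit Types (a b y : R) (v w z : C).

Definition qfun w : C := c%:C - 'i * d%:C * w - w ^+ 2.

Lemma theta_sqr : theta c d ^+ 2 = (c - d ^+ 2 / 4)%:C.
Proof.
rewrite /theta; case: ifPn => [c_ge|c_lt]; first by rewrite -rmorphXn sqr_sqrtr.
rewrite exprMn sqr_i -rmorphXn sqr_sqrtr; last by rewrite -ltNge in c_lt; lra.
by rewrite mulrN1 -rmorphN opprB.
Qed.

Lemma qfun_factor w : qfun w = - ((w - delta_p c d) * (w - delta_m c d)).
Proof.
rewrite /qfun /delta_p /delta_m.
have -> : (w - (theta c d - 'i * (d / 2)%:C)) * (w - (- theta c d - 'i * (d / 2)%:C))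
   = w ^+ 2 + 'i * d%:C * w + 'i ^+ 2 * (d / 2)%:C ^+ 2 - theta c d ^+ 2.
  by rewrite rmorphM /= fmorphV /= rmorph_nat; field.
rewrite theta_sqr sqr_i !rmorphB /= !rmorphM /= !fmorphV /= !rmorph_nat.
by field.
Qed.

Lemma qfun_eq0 w : qfun w = 0 <-> w = delta_p c d \/ w = delta_m c d.
Proof.
rewrite qfun_factor; split.
  by move/eqP; rewrite oppr_eq0 mulf_eq0 !subr_eq0 => /orP[] /eqP; tauto.
by case=> ->; rewrite subrr ?mul0r ?mulr0 oppr0.
Qed.

Lemma tfunE a b w : qfun w != 0 -> tfun c d a b w = pfun c d a b w / qfun w.
Proof. by move=> qw; rewrite /tfun /pfun -/(qfun w); field. Qed.

Lemma pfun_shift a a' b w :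
  pfun c d a' b w = pfun c d a b w + (a' - a)%:C * qfun w.
Proof. by rewrite /pfun -/(qfun w) rmorphB /=; ring. Qed.

Lemma qfun_sub z w : qfun z - qfun w = - ((z - w) * (z + w + 'i * d%:C)).
Proof. by rewrite /qfun; ring. Qed.

Lemma tfun_sub a b z w : tfun c d a b w - tfun c d a b z =
  (z ^+ 2 - w ^+ 2) + b%:C * (z ^+ 2 / qfun z - w ^+ 2 / qfun w).
Proof. by rewrite /tfun -!/(qfun _); ring. Qed.

(** The numerator [p_(a,b)] with complex coefficients: a root of
    [ppoly (a - v) b] is a point where [p_(a,b) = v q]. *)
Definition ppoly (a b : C) : {poly C} :=
  ('X^2 - a%:P) * ('X^2 + ('i * d%:C) *: 'X - (c%:C)%:P) - b *: 'X^2.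

Lemma horner_ppoly a b v w :
  (ppoly (a%:C - v) b%:C).[w] = pfun c d a b w - v * qfun w.
Proof. by rewrite /ppoly /pfun /qfun !hornerE; ring. Qed.

Lemma ppoly_monic (a b : C) : ppoly a b \is monic /\ size (ppoly a b) = 5%N.
Proof.
have size_lin : (size (('i * d%:C) *: 'X - (c%:C)%:P : {poly C})%R < 3)%N.
  apply: leq_ltn_trans (size_polyD _ _) _; rewrite gtn_max size_polyN size_polyC.
  by rewrite (leq_ltn_trans (size_scale_leq _ _)) ?size_polyX // ltnS (leq_trans (leq_b1 _)).
have mon1 : 'X^2 - a%:P \is monic by rewrite monicXnsubC.
have mon2 : 'X^2 + ('i * d%:C) *: 'X - (c%:C)%:P \is monic.
  by rewrite -addrA monicE lead_coefDl ?lead_coefXn ?size_polyXn.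
have size12 : size (('X^2 - a%:P) * ('X^2 + ('i * d%:C) *: 'X - (c%:C)%:P)) = 5%N.
  by rewrite size_mul ?monic_neq0 // size_XnsubC // -addrA size_polyDl ?size_polyXn.
have size_b : (size (- (b *: 'X^2) : {poly C})%R < 5)%N.
  by rewrite size_polyN (leq_ltn_trans (size_scale_leq _ _)) // size_polyXn.
split; last by rewrite /ppoly size_polyDl size12.
by rewrite /ppoly monicE lead_coefDl ?size12 // -monicE monicMl.
Qed.

Lemma qfun_axis y : qfun (0 +i* y) = (c + d * y + y ^+ 2)%:C.
Proof. by apply/eqP; rewrite /qfun !expr2 eq_complex /=; apply/andP; split; apply/eqP; ring. Qed.

Lemma sqr_axis y : (0 +i* y) ^+ 2 = (- y ^+ 2)%:C :> C.
Proof. by apply/eqP; rewrite !expr2 eq_complex /=; apply/andP; split; apply/eqP; ring. Qed.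

Lemma pfun_axis a b y : pfun c d a b (0 +i* y) =
  ((a + y ^+ 2) * (c + d * y + y ^+ 2) + b * y ^+ 2)%:C.
Proof. by rewrite /pfun -/(qfun _) qfun_axis sqr_axis !rmorphD !rmorphM /= !rmorphN /=; ring. Qed.

Lemma qfun_axis_eq0 y : (qfun (0 +i* y) == 0) = (c + d * y + y ^+ 2 == 0).
Proof. by rewrite qfun_axis -[0 : C]/(0%:C) (inj_eq (@complexI R)). Qed.

Lemma tfun_axis a b y : c + d * y + y ^+ 2 != 0 ->
  tfun c d a b (0 +i* y) = (a + y ^+ 2 + y ^+ 2 * b / (c + d * y + y ^+ 2))%:C.
Proof.
move=> Q_neq0; rewrite tfunE ?qfun_axis_eq0 // pfun_axis qfun_axis -fmorph_div.
by congr (_%:C); field.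
Qed.


Lemma normc_qfun_sub z w :
  normc (qfun z - qfun w) <= normc (z - w) * (normc z + normc w + `|d|).
Proof.
rewrite qfun_sub normcN normcM ler_wpM2l ?normc_ge0 //.
by rewrite -normc_iR (le_trans (le_normcD _ _)) // lerD2r le_normcD.
Qed.

Lemma normc_sqr_sub z w : normc (z ^+ 2 - w ^+ 2) <= normc (z - w) * (normc z + normc w).
Proof.
rewrite (_ : z ^+ 2 - w ^+ 2 = (z - w) * (z + w)); last by ring.
by rewrite normcM ler_wpM2l ?normc_ge0 ?le_normcD.
Qed.

Lemma normc_sqr_div_qfun_sub z w : qfun z != 0 -> qfun w != 0 ->
  normc (z ^+ 2 / qfun z - w ^+ 2 / qfun w) <=
  normc (z - w) * (normc z + normc w + `|d|) * (normc (qfun w) + normc w ^+ 2)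
  / (normc (qfun z) * normc (qfun w)).
Proof.
move=> qz_neq0 qw_neq0.
have -> : z ^+ 2 / qfun z - w ^+ 2 / qfun w =
    ((z ^+ 2 - w ^+ 2) * qfun w + w ^+ 2 * (qfun w - qfun z)) / (qfun z * qfun w).
  by field; apply/andP.
rewrite normcM normcV normcM ler_wpM2r ?invr_ge0 ?mulr_ge0 ?normc_ge0 //.
apply: le_trans (le_normcD _ _) _; rewrite normcM [normc (w ^+ 2 * _)]normcM normcX (distcC (qfun w)).
have sqr_diff : normc (z ^+ 2 - w ^+ 2) <= normc (z - w) * (normc z + normc w + `|d|).
  by rewrite (le_trans (normc_sqr_sub z w)) // ler_wpM2l ?normc_ge0 // lerDl.
have := ler_wpM2r (normc_ge0 (qfun w)) sqr_diff.
have := ler_wpM2l (sqr_ge0 (normc w)) (normc_qfun_sub z w); lra.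
Qed.

Lemma tfun_near w : qfun w != 0 ->
  exists2 delta, 0 < delta & exists2 M, 0 <= M & forall z, normc (z - w) < delta ->
    qfun z != 0 /\ forall a b,
      normc (tfun c d a b z - tfun c d a b w) <= normc (z - w) * M * (1 + `|b|).
Proof.
move=> qw_neq0; set Nq := normc (qfun w); set Nw := normc w.
have Nq_gt0 : 0 < Nq by rewrite normc_gt0.
pose L := 2 * Nw + 1 + `|d|.
have Nw_ge0 : 0 <= Nw := normc_ge0 w.
have L_gt0 : 0 < L by rewrite /L; have := normr_ge0 d; lra.
pose X := 2 * (Nq + Nw ^+ 2) / Nq ^+ 2.
have X_ge0 : 0 <= X by rewrite /X divr_ge0 ?sqr_ge0 //; have := sqr_ge0 Nw; lra.
exists (Num.min 1 (Nq / (2 * L))); first by rewrite lt_min ltr01 divr_gt0 ?mulr_gt0.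
exists (L * (1 + X)) => [|z]; first by rewrite mulr_ge0 ?ltW //; lra.
rewrite lt_min ltr_pdivlMr ?mulr_gt0 // => /andP[zw_lt1 zw_small].
set e := normc (z - w) in zw_lt1 zw_small *; have e_ge0 : 0 <= e := normc_ge0 _.
have zw_L : normc z + Nw + `|d| <= L by have := ler_distcD z w; rewrite /L -/e -/Nw; lra.
have Nqz : Nq / 2 <= normc (qfun z).
  have := ler_distcD (qfun w) (qfun z); rewrite distcC -/Nq.
  have := le_trans (normc_qfun_sub z w) (ler_wpM2l e_ge0 zw_L); lra.
have qz_neq0 : qfun z != 0 by rewrite -normc_gt0; lra.
split => // a b; rewrite distcC tfun_sub.
apply: le_trans (le_normcD _ _) _; rewrite normcM normcR.
have sqr_diff : normc (z ^+ 2 - w ^+ 2) <= e * L.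
  by rewrite (le_trans (normc_sqr_sub z w)) // ler_wpM2l // -/Nw; have := normr_ge0 d; lra.
have ratio_bound : normc (z ^+ 2 / qfun z - w ^+ 2 / qfun w) <= e * L * X.
  apply: le_trans (normc_sqr_div_qfun_sub qz_neq0 qw_neq0) _; rewrite -/Nq -/Nw -/e.
  rewrite ler_pdivrMr ?mulr_gt0 //; last by lra.
  have XNq : X * (Nq / 2 * Nq) = Nq + Nw ^+ 2 by rewrite /X; field; exact: lt0r_neq0.
  have den : Nq + Nw ^+ 2 <= X * (normc (qfun z) * Nq).
    by rewrite -XNq ler_wpM2l // ler_wpM2r // ltW.
  apply: (@le_trans _ _ (e * L * (Nq + Nw ^+ 2))).
    by rewrite ler_wpM2r ?ler_wpM2l // addr_ge0 ?sqr_ge0 // ltW.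
  by rewrite -[e * L * X * _]mulrA ler_wpM2l // mulr_ge0 // ltW.
have eL_ge0 := mulr_ge0 e_ge0 (ltW L_gt0).
have := ler_wpM2l (normr_ge0 b) ratio_bound; have := mulr_ge0 eL_ge0 X_ge0.
have := mulr_ge0 eL_ge0 (normr_ge0 b); have := mulr_ge0 (mulr_ge0 eL_ge0 X_ge0) (normr_ge0 b).
lra.
Qed.

End DampingFactor.

Section InnerProduct.
Variables (R : realType) (V : lmodType R[i]) (ip : V -> V -> R[i]).
Hypothesis ip_inner : is_inner_product ip.
Implicit Types (x y z : V) (s t : R).

Lemma ipDl x y z : ip (x + y) z = ip x z + ip y z.
Proof. by case: ip_inner. Qed.

Lemma ipZl (a : R[i]) x y : ip (a *: x) y = a * ip x y.
Proof. by case: ip_inner. Qed.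

Lemma ipC x y : ip y x = (ip x y)^*.
Proof. by case: ip_inner. Qed.

Lemma ipDr x y z : ip x (y + z) = ip x y + ip x z.
Proof. by rewrite ipC ipDl rmorphD /= -!ipC. Qed.

Lemma ipZr (a : R[i]) x y : ip x (a *: y) = a^* * ip x y.
Proof. by rewrite ipC ipZl rmorphM /= -ipC. Qed.

Definition sqnorm x : R := complex.Re (ip x x).

Lemma ip_sqnorm x : ip x x = (sqnorm x)%:C.
Proof.
case: ip_inner => _ _ _ /(_ x) + _; rewrite /sqnorm.
by case: (ip x x) => a b; rewrite lecE /= => /andP[/eqP -> _].
Qed.

Lemma sqnorm_ge0 x : 0 <= sqnorm x.
Proof. by case: ip_inner => _ _ _ /(_ x); rewrite ip_sqnorm lecR. Qed.

Lemma sqnorm_gt0 x : x <> 0 -> 0 < sqnorm x.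
Proof.
move=> x_neq0; rewrite lt_def sqnorm_ge0 andbT; apply/eqP => x0.
by case: ip_inner => _ _ _ _ /(_ x); rewrite ip_sqnorm x0 => /(_ erefl).
Qed.

Lemma ip_combR s t x1 x2 y1 y2 :
  complex.Re (ip (s%:C *: x1 + t%:C *: x2) (s%:C *: y1 + t%:C *: y2)) =
  s * s * complex.Re (ip x1 y1) + s * t * complex.Re (ip x1 y2 + ip x2 y1)
  + t * t * complex.Re (ip x2 y2).
Proof.
have -> : ip (s%:C *: x1 + t%:C *: x2) (s%:C *: y1 + t%:C *: y2) =
    (s * s)%:C * ip x1 y1 + (s * t)%:C * (ip x1 y2 + ip x2 y1) + (t * t)%:C * ip x2 y2.
  by rewrite !ipDl !ipDr !ipZl !ipZr !conjR !rmorphM /=; ring.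
by rewrite !ReD !ReMR ReD.
Qed.

Lemma sqnormZR s x : sqnorm (s%:C *: x) = s ^+ 2 * sqnorm x.
Proof. by rewrite /sqnorm ipZl ipZr conjR mulrA -rmorphM ReMR expr2. Qed.

Lemma normalize_unit x : x <> 0 ->
  let u := (Num.sqrt (sqnorm x))^-1%:C *: x in ip u u = 1.
Proof.
move=> /sqnorm_gt0 x_gt0 /=; rewrite ip_sqnorm sqnormZR exprVn sqr_sqrtr ?ltW //.
by rewrite mulVf ?gt_eqF.
Qed.

Section Operator.
Variables (D : set V) (A : V -> V).
Hypotheses (D_subspace : is_subspace D) (A_linear : linear_on D A).

Lemma subspaceZ (a : R[i]) x : D x -> D (a *: x).
Proof.
by case: D_subspace => D0 Dlin Dx; have := Dlin a x 0 Dx D0; rewrite addr0.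
Qed.

Lemma subspace_comb (a b : R[i]) x y : D x -> D y -> D (a *: x + b *: y).
Proof. by case: D_subspace => _ Dlin Dx Dy; apply: Dlin => //; apply: subspaceZ. Qed.

Lemma linear_on0 : A 0 = 0.
Proof.
case: D_subspace => D0 _; have := A_linear 1 D0 D0.
by rewrite !scale1r addr0 => A00; rewrite -[RHS](subrr (A 0)) {2}A00 addrK.
Qed.

Lemma linear_onZ (a : R[i]) x : D x -> A (a *: x) = a *: A x.
Proof.
by case: D_subspace => D0 _ Dx; have := A_linear a Dx D0; rewrite !addr0 linear_on0 addr0.
Qed.

Lemma linear_on_comb (a b : R[i]) x y : D x -> D y ->
  A (a *: x + b *: y) = a *: A x + b *: A y.
Proof. by move=> Dx Dy; rewrite A_linear ?linear_onZ //; apply: subspaceZ. Qed.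

Definition rayleigh x : R := complex.Re (ip (A x) x) / sqnorm x.

Lemma numrange_rayleigh x : D x -> x <> 0 -> numrange ip D A (rayleigh x).
Proof.
move=> Dx x_neq0; set s := (Num.sqrt (sqnorm x))^-1.
exists (s%:C *: x); first by split; [exact: subspaceZ | exact: normalize_unit].
rewrite linear_onZ // ipZl ipZr conjR mulrA -rmorphM ReMR.
have x_gt0 := sqnorm_gt0 x_neq0.
by rewrite /s -expr2 exprVn sqr_sqrtr ?ltW // mulrC.
Qed.

Lemma numrange_is_interval : is_interval (numrange ip D A).
Proof.
apply/is_intervalPlt => _ _ [x [Dx x1] <-] [y [Dy y1] <-] r /andP[ur rv].
pose Z s t := s%:C *: x + t%:C *: y.
have DZ s t : D (Z s t) by apply: subspace_comb.
set u := complex.Re (ip (A x) x) in ur; set v := complex.Re (ip (A y) y) in rv.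
pose k := complex.Re (ip (A x) y + ip (A y) x).
pose m := complex.Re (ip x y + ip y x).
have AZ s t : complex.Re (ip (A (Z s t)) (Z s t)) = s * s * u + s * t * k + t * t * v.
  by rewrite linear_on_comb // ip_combR.
have nZ s t : sqnorm (Z s t) = s * s + s * t * m + t * t.
  by rewrite /sqnorm ip_combR x1 y1 /= !mulr1.
(* [p.[t]] is the numerator of [rayleigh (Z (1 - t) t) - r]: it equals [u - r < 0]
   at [0] and [v - r > 0] at [1]. *)
pose p : {poly R} := (u - r)%:P * (1 - 'X) ^+ 2 + (k - r * m)%:P * ((1 - 'X) * 'X)
   + (v - r)%:P * 'X ^+ 2.
have p_eval t : p.[t] = complex.Re (ip (A (Z (1 - t) t)) (Z (1 - t) t)) - r * sqnorm (Z (1 - t) t).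
  by rewrite AZ nZ /p !hornerE /=; ring.
have sign_change : p.[0] * p.[1] <= 0 by rewrite !p_eval !AZ !nZ; nra.
have [t _ /rootP] := polyrcf.poly_ivt ler01 sign_change.
rewrite p_eval => /eqP; rewrite subr_eq0 => /eqP rayleigh_r.
have sqnorm_x : sqnorm x = 1 by rewrite /sqnorm x1.
have sqnorm_y : sqnorm y = 1 by rewrite /sqnorm y1.
have Z_neq0 : Z (1 - t) t <> 0.
  move=> /eqP; rewrite addr_eq0 -scaleNr -rmorphN => /eqP xy.
  have := congr1 (fun z => complex.Re (ip (A z) z)) xy; have := congr1 sqnorm xy.
  rewrite /= !sqnormZR sqnorm_x sqnorm_y !linear_onZ // !ipZl !ipZr !conjR.
  rewrite !mulrA -!rmorphM !ReMR -/u -/v => st.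
  have t_half : t = 1 / 2 by nra.
  by rewrite t_half; lra.
have := numrange_rayleigh (DZ _ _) Z_neq0.
by rewrite /rayleigh rayleigh_r mulfK // gt_eqF // sqnorm_gt0.
Qed.

Lemma numrange_neq0 : hdense ip D -> (exists x : V, x <> 0) -> numrange ip D A !=set0.
Proof.
move=> D_dense [x x_neq0].
have x_gt0 : 0 < hnorm ip x by rewrite sqrtr_gt0 sqnorm_gt0.
have [y Dy xy] := D_dense x _ x_gt0.
have y_neq0 : y <> 0 by move=> y0; move: xy; rewrite y0 subr0 ltxx.
by exists (rayleigh y); apply: numrange_rayleigh.
Qed.

End Operator.

Lemma Re_ip_sqr_le x y : complex.Re (ip x y) ^+ 2 <= sqnorm x * sqnorm y.
Proof.
have [-> | y_neq0] := eqVneq y 0.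
  by rewrite -(scale0r 0) ipZr rmorph0 (ReMR 0) sqnormZR !expr2 !(mul0r, mulr0).
have y_gt0 := sqnorm_gt0 (elimN eqP y_neq0).
set rho := complex.Re (ip x y); set t := - rho / sqnorm y.
have ty : t * sqnorm y = - rho by rewrite mulfVK ?gt_eqF.
have := sqnorm_ge0 (1%:C *: x + t%:C *: y).
rewrite /sqnorm ip_combR (ipC x y) ReD -/rho -!/(sqnorm _).
have -> : complex.Re (ip x y)^* = rho by rewrite /rho; case: (ip x y).
nra.
Qed.

Lemma numrange_bounded (B : V -> V) (M : R) :
  (forall x, hnorm ip (B x) <= M * hnorm ip x) ->
  forall r, numrange ip setT B r -> `|r| <= M.
Proof.
move=> B_bounded _ [x [_ x1] <-].
have sqnorm_x : sqnorm x = 1 by rewrite /sqnorm x1.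
have := B_bounded x; rewrite [hnorm ip x]/hnorm -/(sqnorm x) sqnorm_x sqrtr1 mulr1.
rewrite /hnorm -/(sqnorm (B x)) => normBx.
have := Re_ip_sqr_le (B x) x; rewrite sqnorm_x mulr1 -(sqr_sqrtr (sqnorm_ge0 (B x))).
have := sqrtr_ge0 (sqnorm (B x)); rewrite ler_norml => *; apply/andP; split; nra.
Qed.

End InnerProduct.

Section IntervalClosure.
Variable R : realType.
Implicit Types (E : set R) (r e : R).

Lemma is_interval_near E r e : is_interval E -> 0 < e ->
  (exists2 u, E u & u < r + e) -> (exists2 v, E v & r - e < v) ->
  exists2 w, E w & `|r - w| < e.
Proof.
move=> E_itv e_gt0 [u Eu ur] [v Ev rv].
have [ru|ur'] := ltP (r - e) u.
  by exists u => //; rewrite ltr_norml; apply/andP; split; lra.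
have [vr|rv'] := ltP v (r + e).
  by exists v => //; rewrite ltr_norml; apply/andP; split; lra.
exists r; last by rewrite subrr normr0.
by apply: (E_itv u v) => //; apply/andP; split; lra.
Qed.

Lemma closure_is_interval_ereal E : E !=set0 -> is_interval E ->
  closure [set r%:E | r in E] =
  [set x | (ereal_inf [set r%:E | r in E] <= x)%E /\ (x <= ereal_sup [set r%:E | r in E])%E].
Proof.
move=> [u0 Eu0] E_itv; set F := [set r%:E | r in E].
apply/seteqP; split.
  have F_sub : F `<=` [set x | (ereal_inf F <= x)%E /\ (x <= ereal_sup F)%E].
    by move=> x Fx; split; [apply: ereal_inf_lbound | apply: ereal_sup_ubound].
  have closed_seg : closed [set x | (ereal_inf F <= x)%E /\ (x <= ereal_sup F)%E].
    exact: (closedI (@closed_ereal_le_ereal R _) (@closed_ereal_ge_ereal R _)).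
  by move=> x /(closureS F_sub); rewrite -(closure_id _).1.
move=> [r| |] [infx xsup] B.
- rewrite /nbhs /= => /nbhs_ballP [e /= e_gt0 ballB].
  have [w Ew rw] : exists2 w, E w & `|r - w| < e.
    apply: is_interval_near => //.
      have /ereal_inf_lt[_ [y Ey <-]] : (ereal_inf F < (r + e)%:E)%E.
        by apply: le_lt_trans infx _; rewrite lte_fin; lra.
      by rewrite lte_fin => ?; exists y.
    have /ereal_sup_gt[_ [y Ey <-]] : ((r - e)%:E < ereal_sup F)%E.
      by apply: lt_le_trans xsup; rewrite lte_fin; lra.
    by rewrite lte_fin => ?; exists y.
  by exists w%:E; split; [exists w | apply: ballB; rewrite /ball /=].
- move=> [M [_ MB]].
  have /ereal_sup_gt[y Fy My] : (M%:E < ereal_sup F)%E.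
    by move: xsup; rewrite leye_eq => /eqP ->; exact: ltry.
  by exists y; split => //; apply: MB.
- move=> [M [_ MB]].
  have /ereal_inf_lt[y Fy My] : (ereal_inf F < M%:E)%E.
    by move: infx; rewrite leeNy_eq => /eqP ->; exact: ltNyr.
  by exists y; split => //; apply: MB.
Qed.

Lemma closure_bounded_is_interval E (K : R) : E !=set0 ->
  (forall r, E r -> `|r| <= K) -> is_interval E ->
  closure E = [set x | inf E <= x /\ x <= sup E].
Proof.
move=> [u0 Eu0] E_bounded E_itv.
have E_sup : has_sup E.
  split; first by exists u0.
  by exists K => r /E_bounded; rewrite ler_norml => /andP[].
have E_inf : has_inf E.
  split; first by exists u0.
  by exists (- K) => r /E_bounded; rewrite ler_norml => /andP[].
apply/seteqP; split.
  have E_sub : E `<=` [set x | inf E <= x /\ x <= sup E].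
    by move=> x Ex; split; [apply: ge_inf => //; case: E_inf | apply: sup_upper_bound].
  have closed_seg : closed [set x | inf E <= x /\ x <= sup E].
    exact: (closedI (@closed_ge R _) (@closed_le R _)).
  by move=> x /(closureS E_sub); rewrite -(closure_id _).1.
move=> r [infr rsup] B /nbhs_ballP [e /= e_gt0 ballB].
have [w Ew rw] : exists2 w, E w & `|r - w| < e.
  apply: is_interval_near => //.
    by have [y Ey ?] := inf_adherent e_gt0 E_inf; exists y => //; lra.
  by have [y Ey ?] := sup_adherent e_gt0 E_sup; exists y => //; lra.
by exists w; split => //; apply: ballB; rewrite /ball /=.
Qed.

End IntervalClosure.

(** [OA] and [OB] stand for [closure W(A)] (in the extended reals) and
    [closure W(B)], and [OAe] for their [eps]-enlargement [closure W(A^eps)]. *)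
Section ImaginaryAxis.
Variables (R : realType) (c d eps : R) (I S : \bar R) (mB MB : R).
Hypotheses (eps_gt0 : 0 < eps) (mB_le_MB : mB <= MB).
Hypothesis OA_real : exists u : R, (I <= u%:E)%E /\ (u%:E <= S)%E.
Local Notation C := R[i].
Local Notation OA := [set x : \bar R | (I <= x)%E /\ (x <= S)%E].
Local Notation OAe := [set x : \bar R | (I - eps%:E <= x)%E /\ (x <= S + eps%:E)%E].
Local Notation OB := [set b : R | mB <= b /\ b <= MB].
Local Notation Weps := (W_Omega_eps c d OA OB eps).
Local Notation qfun := (qfun c d).

Lemma OA_sub_OAe : OA `<=` OAe.
Proof.
move=> x [Ix xS]; split.
  by apply: le_trans Ix; rewrite geeDl // -EFinN lee_fin oppr_le0 ltW.
by apply: le_trans xS _; rewrite leeDl // lee_fin ltW.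
Qed.

Lemma OAe_infty x : x = +oo%E \/ x = -oo%E -> OAe x -> OA x.
Proof.
case=> ->.
  by case: S => [s||] [_] //=; rewrite ?leey // leye_eq.
by case: I => [i||] [] //=; rewrite ?leNye // leeNy_eq.
Qed.

Lemma OAe_near_OA a : OAe a%:E -> exists a', OA a'%:E /\ `|a - a'| <= eps.
Proof.
have [u [Iu uS]] := OA_real; have := eps_gt0; move=> eps_pos [Ia aS].
have pick a' : (I <= a'%:E)%E -> (a'%:E <= S)%E -> a - eps <= a' -> a' <= a + eps ->
    exists a', OA a'%:E /\ `|a - a'| <= eps.
  by move=> *; exists a'; split => //; rewrite ler_norml; apply/andP; split; lra.
case: I Iu Ia pick => [i| |] //= Iu Ia; case: S uS aS => [s| |] //= uS aS pick;
  rewrite ?lee_fin in Iu Ia uS aS.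
- have [ai|ia] := ltP a i; first by apply: (pick i); rewrite ?lee_fin //; lra.
  have [sa|a_le_s] := ltP s a; first by apply: (pick s); rewrite ?lee_fin //; lra.
  by apply: (pick a); rewrite ?lee_fin //; lra.
- have [ai|ia] := ltP a i; first by apply: (pick i); rewrite ?lee_fin ?leey //; lra.
  by apply: (pick a); rewrite ?lee_fin ?leey //; lra.
- have [sa|a_le_s] := ltP s a; first by apply: (pick s); rewrite ?lee_fin ?leNye //; lra.
  by apply: (pick a); rewrite ?lee_fin ?leNye //; lra.
- by apply: (pick a); rewrite ?leey ?leNye //; lra.
Qed.

Lemma W_Omega_eps_of_tfun a b (v : R) z : OA a%:E -> OB b -> `|v| < eps ->
  pfun c d a b z = v%:C * qfun z -> Weps z.
Proof.
move=> Aa Bb v_lt pz.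
have [Wz|Wz] := pselect (W_Omega c d OA OB z); [by left | right].
have qz_neq0 : qfun z != 0.
  apply: contra_notN Wz => /eqP qz0.
  by exists a%:E, b; split => //; left; exists a; rewrite // pz qz0 mulr0.
split => [zd|zd|//|].
- by move/eqP: qz_neq0; apply; apply/qfun_eq0; left.
- by move/eqP: qz_neq0; apply; apply/qfun_eq0; right.
exists a%:E, b; split => //; exists a => //.
by rewrite tfunE // pz mulfK // normc_ltR normcR.
Qed.

Lemma root_shift_in_closure a b (x : R) w : OA a%:E -> OB b -> `|x| <= eps ->
  pfun c d (a - x) b w = 0 -> closure_inC Weps w.
Proof.
move=> Aa Bb x_le pw e e_gt0.
set Nq := normc (qfun w); have Nq_ge0 : 0 <= Nq := normc_ge0 _.
have e4_gt0 : 0 < e ^+ 4 by rewrite exprn_gt0.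
have den_gt0 : 0 < e ^+ 4 + eps * Nq + 1 by have := mulr_ge0 (ltW eps_gt0) Nq_ge0; lra.
pose g := e ^+ 4 / (e ^+ 4 + eps * Nq + 1).
have g_gt0 : 0 < g by rewrite divr_gt0.
have g_lt1 : g < 1.
  by rewrite ltr_pdivrMr // mul1r; have := mulr_ge0 (ltW eps_gt0) Nq_ge0; lra.
have gNq : g * (eps * Nq) < e ^+ 4.
  rewrite /g mulrAC ltr_pdivrMr //; have := mulr_ge0 (ltW eps_gt0) Nq_ge0; nra.
(* Shrinking the shift [x] by [1 - g] keeps it below [eps] while the shifted
   quartic takes the value [x g q(w)], of modulus below [e ^ 4], at [w]. *)
pose v := x * (1 - g).
have pv : (ppoly c d (a%:C - v%:C) b%:C).[w] = (x * g)%:C * qfun w.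
  rewrite horner_ppoly (pfun_shift _ _ (a - x)) pw add0r -mulrBl -rmorphB /v.
  by congr (_%:C * _); ring.
have [z /rootP pz zw] : exists2 z, root (ppoly c d (a%:C - v%:C) b%:C) z & `|z - w| < e%:C.
  have [monic size5] := ppoly_monic c d (a%:C - v%:C) b%:C.
  apply: monic_root_near => //; first by rewrite lecR ltW.
  rewrite size5 pv -rmorphXn normc_ltR normcM normcR normrM (ger0_norm (ltW g_gt0)) -/Nq.
  by apply: le_lt_trans gNq; have := mulr_ge0 (ltW g_gt0) Nq_ge0; nra.
exists z => //; apply: (W_Omega_eps_of_tfun (v := v) Aa Bb).
  rewrite /v normrM (@ger0_norm _ (1 - g)); last by lra.
  by have := normr_ge0 x; have := eps_gt0; nra.
by apply/eqP; rewrite -subr_eq0 -horner_ppoly pz.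
Qed.

Lemma W_Omega_OAe_sub_closure : W_Omega c d OAe OB `<=` closure_inC Weps.
Proof.
move=> w [alpha [b [Aalpha Bb [[a a_def pw] | [alpha_infty w_delta]]]]].
  rewrite a_def in Aalpha; have [a' [Aa' aa']] := OAe_near_OA Aalpha.
  apply: (root_shift_in_closure (x := a' - a) Aa' Bb); first by rewrite distrC.
  by rewrite opprB addrC subrK.
move=> e e_gt0; exists w; last by rewrite subrr normr0 ltcR.
by left; exists alpha, b; split => //; [exact: OAe_infty | right].
Qed.

Lemma W_Omega_eps_cases z : Weps z ->
  ((z = delta_p c d \/ z = delta_m c d) /\ (OA +oo%E \/ OA -oo%E)) \/
  exists a b (tau : C), [/\ OA a%:E, OB b, normc tau <= eps &
     pfun c d a b z = tau * qfun z].
Proof.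
case=> [[alpha [b [Aalpha Bb [[a a_def pz] | [alpha_infty z_delta]]]]] |
        [zp zm _ [alpha [b [Aalpha Bb [a a_def tz]]]]]].
- right; exists a, b, 0; rewrite -a_def normc0 pz mul0r; split => //.
  exact: ltW eps_gt0.
- by left; split => //; case: alpha_infty => alpha_def; [left | right]; rewrite -alpha_def.
- right; exists a, b, (tfun c d a b z); rewrite -a_def; split => //.
    by rewrite normc_ltR in tz; exact: ltW.
  have qz_neq0 : qfun z != 0 by apply/eqP => /qfun_eq0 [].
  by rewrite tfunE // divfK.
Qed.

Lemma OA_bounded : ~ OA +oo%E -> ~ OA -oo%E ->
  exists K : R, forall a, OA a%:E -> `|a| <= K.
Proof.
move=> not_pinfty not_ninfty.
case: I not_pinfty not_ninfty => [i| |] /= not_pinfty not_ninfty; last 2 first.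
- by exists 0 => a [].
- by exfalso; apply: not_ninfty; split; rewrite ?leNye.
case: S not_pinfty not_ninfty => [s| |] /= not_pinfty not_ninfty; last 2 first.
- by exfalso; apply: not_pinfty; split; rewrite ?leey.
- by exists 0 => a [_].
exists (`|i| + `|s|) => a []; rewrite !lee_fin => ia a_le_s.
have := ler_norm (- i); have := ler_norm s; have := normr_ge0 i; have := normr_ge0 s.
by rewrite normrN ler_norml => *; apply/andP; split; lra.
Qed.

Lemma W_Omega_eps_bound z : ~ OA +oo%E -> ~ OA -oo%E -> Weps z ->
  exists a b, [/\ OA a%:E, OB b &
    `|b| * normc z ^+ 2 <= (`|a| + normc z ^+ 2 + eps) * normc (qfun z)].
Proof.
move=> not_pinfty not_ninfty /W_Omega_eps_cases [[_ []] // | [a [b [tau [Aa Bb tau_le pz]]]]].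
exists a, b; split => //.
have bz : b%:C * z ^+ 2 = (a%:C - z ^+ 2 - tau) * qfun z.
  by move: pz; rewrite /pfun -/(qfun z) => pz; rewrite mulrBl -pz; ring.
rewrite -normcR -normcX -normcM bz normcM ler_wpM2r ?normc_ge0 //.
apply: le_trans (le_normcD _ _) _; rewrite normcN lerD //.
by apply: le_trans (le_normcD _ _) _; rewrite normcN normcR normcX.
Qed.

Lemma OB_away0 : 0 < mB \/ MB < 0 -> exists2 m, 0 < m & forall b, OB b -> m <= `|b|.
Proof.
case=> [mB_gt0 | MB_lt0]; first by exists mB => // b [mBb _]; exact: le_trans mBb (ler_norm b).
exists (- MB) => [|b [_ bMB]]; first by rewrite oppr_gt0.
by rewrite -normrN (le_trans _ (ler_norm (- b))) // lerN2.
Qed.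

Lemma delta_notin_closure w : qfun w = 0 -> w != 0 -> (0 < mB \/ MB < 0) ->
  ~ OA +oo%E -> ~ OA -oo%E -> ~ closure_inC Weps w.
Proof.
move=> qw0 w_neq0 OB_sign not_pinfty not_ninfty w_cl.
have eps_pos := eps_gt0.
have [K OA_K] := OA_bounded not_pinfty not_ninfty.
have K_ge0 : 0 <= K by have [u Au] := OA_real; exact: le_trans (normr_ge0 u) (OA_K u Au).
have [m m_gt0 OB_m] := OB_away0 OB_sign.
set Nw := normc w; have Nw_gt0 : 0 < Nw by rewrite normc_gt0.
pose H := 2 * Nw + 1 + `|d|; have H_gt0 : 0 < H by rewrite /H; have := normr_ge0 d; lra.
pose G := K + eps + (Nw + 1) ^+ 2.
have G_gt0 : 0 < G by rewrite /G; have := sqr_ge0 (Nw + 1); lra.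
pose e := Num.min 1 (Num.min (Nw / 2) (m * Nw ^+ 2 / (8 * G * H))).
have e_gt0 : 0 < e by rewrite !lt_min ltr01 !divr_gt0 ?mulr_gt0 ?exprn_gt0.
have e_le1 : e <= 1 by rewrite ge_min lexx.
have e_le_Nw : e <= Nw / 2 by rewrite !ge_min lexx orbT.
have e_small : e * (8 * G * H) <= m * Nw ^+ 2.
  by rewrite -ler_pdivlMr ?mulr_gt0 // !ge_min lexx !orbT.
have [z Wz] := w_cl e e_gt0; rewrite normc_ltR => zw_lt.
have [a [b [Aa Bb bound]]] := W_Omega_eps_bound not_pinfty not_ninfty Wz.
set Nz := normc z in bound; have Nz_ge0 : 0 <= Nz := normc_ge0 z.
have Nz_ge : Nw / 2 <= Nz by have := ler_distcD w z; rewrite distcC -/Nw -/Nz; lra.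
have Nz_le : Nz <= Nw + 1 by have := ler_distcD z w; rewrite -/Nw -/Nz; lra.
have qz_small : normc (qfun z) <= e * H.
  have := normc_qfun_sub c d z w; rewrite qw0 subr0 -/Nw -/Nz => /le_trans; apply.
  by apply: ler_pM; rewrite ?normc_ge0 ?addr_ge0 ?normr_ge0 //; rewrite /H; lra.
have lhs : m * (Nw ^+ 2 / 4) <= `|b| * Nz ^+ 2.
  apply: ler_pM; [exact: ltW | by rewrite divr_ge0 ?sqr_ge0 | exact: OB_m | nra].
have rhs : (`|a| + Nz ^+ 2 + eps) * normc (qfun z) <= G * (e * H).
  apply: ler_pM; [ | exact: normc_ge0 | | exact: qz_small].
    by have := normr_ge0 a; have := sqr_ge0 Nz; lra.
  by rewrite /G; have := OA_K a Aa; nra.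
have : G * (e * H) <= m * Nw ^+ 2 / 8 by rewrite ler_pdivlMr //; lra.
have : 0 < m * Nw ^+ 2 by rewrite mulr_gt0 ?exprn_gt0.
lra.
Qed.

Lemma closure_tfun_near w : qfun w != 0 -> closure_inC Weps w ->
  forall eta, 0 < eta -> exists a b, [/\ OA a%:E, OB b & normc (tfun c d a b w) < eps + eta].
Proof.
move=> qw_neq0 w_cl eta eta_gt0.
have [delta delta_gt0 [M M_ge0 t_near]] := tfun_near qw_neq0.
pose Kb := `|mB| + `|MB|.
have OB_Kb b : OB b -> 1 + `|b| <= 1 + Kb.
  move=> [mBb bMB]; rewrite lerD2l /Kb ler_norml.
  have := ler_norm (- mB); have := ler_norm MB; have := normr_ge0 mB; have := normr_ge0 MB.
  by rewrite normrN => *; apply/andP; split; lra.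
have Kb_ge0 : 0 <= 1 + Kb by rewrite /Kb; have := normr_ge0 mB; have := normr_ge0 MB; lra.
pose e := Num.min delta (eta / (M * (1 + Kb) + 1)).
have MKb_gt0 : 0 < M * (1 + Kb) + 1 by have := mulr_ge0 M_ge0 Kb_ge0; lra.
have e_gt0 : 0 < e by rewrite lt_min delta_gt0 divr_gt0.
have [z Wz] := w_cl e e_gt0; rewrite normc_ltR lt_min => /andP[zw_delta].
rewrite ltr_pdivlMr // => zw_eta.
have [qz_neq0 {}t_near] := t_near z zw_delta.
have [[z_delta _] | [a [b [tau [Aa Bb tau_le pz]]]]] := W_Omega_eps_cases Wz.
  by move/eqP: qz_neq0; case; apply/qfun_eq0.
exists a, b; split => //.
have tz : tfun c d a b z = tau by rewrite tfunE // pz mulfK.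
have := ler_distcD (tfun c d a b w) tau; rewrite distcC.
have := t_near a b; rewrite tz.
have := ler_wpM2l (mulr_ge0 (normc_ge0 (z - w)) M_ge0) (OB_Kb b Bb).
have := normc_ge0 (z - w); lra.
Qed.

Lemma segment_meets_OAe (p q : R) : p <= q ->
  (forall eta, 0 < eta -> exists a x, [/\ OA a%:E, p <= x <= q & `|a - x| < eps + eta]) ->
  exists2 x, p <= x <= q & OAe x%:E.
Proof.
move=> pq near; have [u [Iu uS]] := OA_real.
have p_le : (p%:E <= S + eps%:E)%E.
  case: S uS near => [s||] //= uS near; rewrite ?leey // -EFinD lee_fin leNgt.
  apply/negP => s_lt.
  have [a [x [[_ aS] /andP[px _] ax]]] := near (p - s - eps) (ltac:(lra)).
  by move: ax; rewrite lee_fin in aS; rewrite ltr_norml => /andP[]; lra.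
have le_q : (I - eps%:E <= q%:E)%E.
  case: I Iu near => [i||] //= Iu near; rewrite ?leNye // -EFinB lee_fin leNgt.
  apply/negP => i_gt.
  have [a [x [[Ia _] /andP[_ xq] ax]]] := near (i - eps - q) (ltac:(lra)).
  by move: ax; rewrite lee_fin in Ia; rewrite ltr_norml => /andP[]; lra.
have [Ip | pI] := leP (I - eps%:E)%E p%:E; first by exists p; rewrite ?lexx ?pq.
case: I Iu le_q pI {near} => [i||] //= Iu le_q pI; rewrite -EFinB ?lee_fin ?lte_fin in Iu le_q pI.
exists (i - eps); first by rewrite ltW ?le_q.
split; first by rewrite EFinB.
apply: (@le_trans _ _ u%:E); first by rewrite lee_fin; have := eps_gt0; lra.
by apply: le_trans uS _; rewrite leeDl // lee_fin ltW.
Qed.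

Lemma affine_meets_OAe (A0 A1 : R) :
  (forall eta, 0 < eta -> exists a b, [/\ OA a%:E, OB b & `|a - (A0 + A1 * b)| < eps + eta]) ->
  exists2 b, OB b & OAe (A0 + A1 * b)%:E.
Proof.
move=> near; pose f b := A0 + A1 * b.
have f_between b : OB b -> Num.min (f mB) (f MB) <= f b <= Num.max (f mB) (f MB).
  move=> [mBb bMB]; rewrite ge_min le_max /f.
  by have [A1_ge0 | A1_lt0] := leP 0 A1; apply/andP; split; apply/orP; [left | right | right | left]; nra.
have OB_mB : OB mB by split; rewrite ?lexx.
have min_le_max : Num.min (f mB) (f MB) <= Num.max (f mB) (f MB).
  by have /andP[] := f_between _ OB_mB; apply: le_trans.
have near_seg eta : 0 < eta -> exists a x, [/\ OA a%:E,
    Num.min (f mB) (f MB) <= x <= Num.max (f mB) (f MB) & `|a - x| < eps + eta].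
  move=> /near[a [b [Aa Bb ab]]]; exists a, (f b); split => //; exact: f_between.
have [x /andP[fmin_x x_fmax] OAe_x] := segment_meets_OAe min_le_max near_seg.
have f_cont : {within `[mB, MB], continuous f}.
  apply: continuous_subspaceT => b; apply: continuousD; first exact: cst_continuous.
  by apply: continuousM; [exact: cst_continuous | exact: cvg_id].
have [b] := @IVT _ f mB MB x mB_le_MB f_cont (ltac:(by rewrite fmin_x x_fmax)).
by rewrite in_itv /= => /andP[mBb bMB] fb; exists b; rewrite // -/(f b) fb.
Qed.

Lemma closure_delta_W_Omega w : qfun w = 0 -> closure_inC Weps w -> W_Omega c d OAe OB w.
Proof.
move=> qw0 w_cl; have w_delta := (qfun_eq0 c d w).1 qw0.
have OB_mB : OB mB by split; rewrite ?lexx.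
have [pinfty | not_pinfty] := pselect (OA +oo%E).
  by exists +oo%E, mB; split => //; [exact: OA_sub_OAe | right; split => //; left].
have [ninfty | not_ninfty] := pselect (OA -oo%E).
  by exists -oo%E, mB; split => //; [exact: OA_sub_OAe | right; split => //; right].
have [u Au] := OA_real; have OAe_u := OA_sub_OAe Au.
have root_u b : OB b -> b%:C * w ^+ 2 = 0 -> W_Omega c d OAe OB w.
  move=> Bb bw; exists u%:E, b; split => //; left; exists u => //.
  by rewrite /pfun -/(qfun w) qw0 mulr0 bw subr0.
have [/andP[mB_le0 ge0_MB] | OB_no0] := boolP ((mB <= 0) && (0 <= MB)).
  by apply: (root_u 0); [split | rewrite mul0r].
have [w0 | w_neq0] := eqVneq w 0; first by apply: (root_u mB); rewrite // w0 expr0n mulr0.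
exfalso; apply: (delta_notin_closure qw0 w_neq0 _ not_pinfty not_ninfty w_cl).
by move: OB_no0; rewrite negb_and -!ltNge => /orP[]; [left | right].
Qed.

Lemma closure_axis_W_Omega y : c + d * y + y ^+ 2 != 0 ->
  closure_inC Weps (0 +i* y) -> W_Omega c d OAe OB (0 +i* y).
Proof.
set Q := c + d * y + y ^+ 2 => Q_neq0 w_cl.
have qw_neq0 : qfun (0 +i* y) != 0 by rewrite qfun_axis_eq0.
have [|b Bb OAe_b] := @affine_meets_OAe (- y ^+ 2) (- (y ^+ 2 / Q)).
  move=> eta /(closure_tfun_near qw_neq0 w_cl)[a [b [Aa Bb tw]]]; exists a, b; split => //.
  move: tw; rewrite tfun_axis // normcR.
  by rewrite (_ : a + y ^+ 2 + y ^+ 2 * b / Q = a - (- y ^+ 2 + - (y ^+ 2 / Q) * b)) //; field.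
exists (- y ^+ 2 + - (y ^+ 2 / Q) * b)%:E, b; split => //; left; eexists; first by [].
by rewrite pfun_axis -/Q (_ : (- y ^+ 2 + - (y ^+ 2 / Q) * b + y ^+ 2) * Q + b * y ^+ 2 = 0)
  ?rmorph0 //; field.
Qed.

Theorem closure_W_Omega_eps_imag_axis :
  closure_inC Weps `&` @imag_axis R = W_Omega c d OAe OB `&` @imag_axis R.
Proof.
apply/seteqP; split => w [w_cl w_axis]; split => //; last exact: W_Omega_OAe_sub_closure.
case: w w_cl w_axis => x y w_cl; rewrite /imag_axis /= => x0; subst x.
have [qw0 | qw_neq0] := eqVneq (qfun (0 +i* y)) 0; first exact: closure_delta_W_Omega.
by apply: closure_axis_W_Omega; rewrite // -qfun_axis_eq0.
Qed.

End ImaginaryAxis.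

Unset Implicit Arguments.

Theorem proposition4p7 (R : realType) (V : lmodType R[i]) (ip : V -> V -> R[i])
  (hV : is_hilbert ip)
  (DA : set V) (A : V -> V) (hA : selfadjoint ip DA A)
  (B : V -> V) (hB : bounded_selfadjoint ip B) (hB0 : exists x, B x <> 0)
  (c d : R) (hc : 0 <= c) (hd : 0 < d)
  (eps : R) (heps : 0 < eps)
  (DAe : set V) (Ae : V -> V) (hAe : selfadjoint ip DAe Ae)
  (hWAe : numrange_cl_ext ip DAe Ae =
     [set x : \bar R | (ereal_inf [set r%:E | r in numrange ip DA A] - eps%:E <= x)%E
                       /\ (x <= ereal_sup [set r%:E | r in numrange ip DA A] + eps%:E)%E]) :
  closure_inC (W_Omega_eps c d (numrange_cl_ext ip DA A) (numrange_cl ip B) eps)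
    `&` @imag_axis R
  = W_Omega c d (numrange_cl_ext ip DAe Ae) (numrange_cl ip B) `&` @imag_axis R.
Proof.
have [[A_sub A_lin A_dense _] [[B_sub B_lin B_dense _] [M B_bounded]]] := (hA, hB).
have V_nontrivial : exists x : V, x <> 0 by have [x Bx] := hB0; exists (B x).
have [u WA_u] := numrange_neq0 hV.1 A_sub A_lin A_dense V_nontrivial.
have [b WB_b] := numrange_neq0 hV.1 B_sub B_lin B_dense V_nontrivial.
have WA_cl := closure_is_interval_ereal (ex_intro _ u WA_u)
  (numrange_is_interval hV.1 A_sub A_lin).
have WB_cl := closure_bounded_is_interval (ex_intro _ b WB_b)
  (numrange_bounded hV.1 B_bounded) (numrange_is_interval hV.1 B_sub B_lin).
rewrite hWAe /numrange_cl_ext /numrange_cl WA_cl WB_cl.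
apply: closure_W_Omega_eps_imag_axis => //.
  have : closure (numrange ip setT B) b by exact: subset_closure.
  by rewrite WB_cl => -[]; exact: le_trans.
by exists u; split; [apply: ereal_inf_lbound | apply: ereal_sup_ubound]; exists u.
Qed.
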